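(* If $x\mapsto p(x)r(x)$ is increasing on $(a,b)$, then $|w_\lambda(x)|\le 1$ for all $x\in(a,b)$ and all $\lambda\ge 0$.
   Context: Let $-\infty\le a<b\le\infty$ and let $p,r:(a,b)\to(0,\infty)$ be functions such that $p,p',r,r'$ are locally absolutely continuous on $(a,b)$. Write $\ell u=-\frac{1}{r}(p u')'$ and $u^{[1]}=p u'$. It is assumed that $\int_a^c\int_y^c \frac{dx}{p(x)}\,r(y)\,dy<\infty$ for some $c\in(a,b)$. For $\lambda\in\mathbb C$, $w_\lambda$ denotes the unique solution of $\ell w=\lambda w$ on $(a,b)$ with $\lim_{x\downarrow a}w(x)=1$ and $\lim_{x\downarrow a}w^{[1]}(x)=0$. *)

From Stdlib Require Import Reals Lra List.
Open Scope R_scope.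

(* Endpoints of the interval (a,b): [None] for a means -oo, [None] for b means +oo. *)
Definition in_I (a b : option R) (x : R) : Prop :=
  match a with Some a0 => a0 < x | None => True end /\
  match b with Some b0 => x < b0 | None => True end.

Definition ext_lt (a b : option R) : Prop :=
  match a, b with Some a0, Some b0 => a0 < b0 | _, _ => True end.

Fixpoint chain (c d : R) (l : list (R * R)) : Prop :=
  match l with
  | nil => True
  | (s, t) :: l' => c <= s /\ s <= t /\ t <= d /\ chain t d l'
  end.

Definition total_length (l : list (R * R)) : R :=
  fold_right (fun st acc => (snd st - fst st) + acc) 0 l.

Definition total_variation_on (f : R -> R) (l : list (R * R)) : R :=
  fold_right (fun st acc => Rabs (f (snd st) - f (fst st)) + acc) 0 l.

Definition AC_on (f : R -> R) (c d : R) : Prop :=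
  forall eps, 0 < eps -> exists delta, 0 < delta /\
    forall l, chain c d l -> total_length l < delta ->
      total_variation_on f l < eps.

Definition loc_AC (a b : option R) (f : R -> R) : Prop :=
  forall c d, in_I a b c -> in_I a b d -> c <= d -> AC_on f c d.

Definition loc_AC_with_loc_AC_deriv (a b : option R) (f : R -> R) : Prop :=
  loc_AC a b f /\
  exists df, (forall x, in_I a b x -> derivable_pt_lim f x (df x)) /\ loc_AC a b df.

Definition lim_at_left_end (a b : option R) (f : R -> R) (l : R) : Prop :=
  forall eps, 0 < eps ->
    match a with
    | Some a0 => exists delta, 0 < delta /\
        forall x, in_I a b x -> x < a0 + delta -> Rabs (f x - l) < eps
    | None => exists M, forall x, in_I a b x -> x < M -> Rabs (f x - l) < eps
    end.

Definition is_RInt (f : R -> R) (s t v : R) : Prop :=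
  exists pr : Riemann_integrable f s t, RiemannInt pr = v.

(* int_a^c int_y^c dx/p(x) r(y) dy < oo for some c in (a,b)
   (nonnegative integrand: the improper integral at a is finite iff the
   integrals over [t,c] are bounded as t decreases to a) *)
Definition integrability_condition (a b : option R) (p r : R -> R) : Prop :=
  exists c M, in_I a b c /\
    forall t, in_I a b t -> t <= c ->
      exists g : R -> R,
        (forall y, t <= y <= c -> is_RInt (fun x => / p x) y c (g y)) /\
        exists v, is_RInt (fun y => g y * r y) t c v /\ v <= M.

Definition is_w_lambda (a b : option R) (p r : R -> R) (lam : R) (w : R -> R) : Prop :=
  exists dw dpw : R -> R,
    (forall x, in_I a b x -> derivable_pt_lim w x (dw x)) /\
    (forall x, in_I a b x -> derivable_pt_lim (fun y => p y * dw y) x (dpw x)) /\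
    (forall x, in_I a b x -> - (/ r x) * dpw x = lam * w x) /\
    lim_at_left_end a b w 1 /\
    lim_at_left_end a b (fun y => p y * dw y) 0.

(* With u = p w' the equation reads u' = -λ r w, and the energy
   E = λ w² + u²/(p r) satisfies E' = -(p r)' u²/(p r)² <= 0, so
   λ w(x)² <= E(t) for every t <= x.  As t decreases to a, w(t) tends to 1,
   and the kinetic term u²/(p r) comes arbitrarily close to 0: if instead
   u² >= ε p r near a, then -u >= √ε √(p r) there, and since p r is
   increasing the function -c w + u with c = λ √(p r)(t) / √ε is increasing
   on (a, t], which gives √ε (-u(t)) <= λ √(p r)(t) (1 - w(t)) and forces
   u(t)² < ε p r(t) once w(t) is close to 1.  Hence λ w(x)² <= λ.  For λ = 0
   both u and w are constant. *)
From Stdlib Require Import Reals Lra Psatz Classical.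
Open Scope R_scope.

Section Interval.
Variables a b : option R.

Lemma in_I_between x y z : in_I a b x -> in_I a b y -> x <= z <= y -> in_I a b z.
Proof. destruct a, b; unfold in_I; simpl; intros; lra. Qed.

Lemma in_I_Rmin x y : in_I a b x -> in_I a b y -> in_I a b (Rmin x y).
Proof. unfold Rmin; destruct Rle_dec; auto. Qed.

Lemma in_I_exists_lt x : in_I a b x -> exists y, in_I a b y /\ y < x.
Proof.
  destruct a as [a0|]; intros Hx.
  - exists ((a0 + x) / 2). destruct b; unfold in_I in *; simpl in *; split; lra.
  - exists (x - 1). destruct b; unfold in_I in *; simpl in *; split; lra.
Qed.

Lemma in_I_exists_gt x : in_I a b x -> exists y, in_I a b y /\ x < y.
Proof.
  destruct b as [b0|]; intros Hx.
  - exists ((b0 + x) / 2). destruct a; unfold in_I in *; simpl in *; split; lra.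
  - exists (x + 1). destruct a; unfold in_I in *; simpl in *; split; lra.
Qed.

(* Limit at the left end point, phrased through points of (a,b) so that the
   cases a = -oo and a finite need not be distinguished. *)
Definition tends_left (f : R -> R) (l : R) : Prop :=
  forall eps, 0 < eps -> exists s, in_I a b s /\
    forall t, in_I a b t -> t < s -> Rabs (f t - l) < eps.

Lemma lim_at_left_end_tends_left f l x :
  in_I a b x -> lim_at_left_end a b f l -> tends_left f l.
Proof.
  intros Hx Hlim eps Heps. specialize (Hlim eps Heps). destruct a as [a0|].
  - destruct Hlim as [d [Hd Hnear]].
    exists (Rmin x (a0 + d / 2)). split.
    + unfold Rmin; destruct Rle_dec; auto.
      destruct b; unfold in_I in *; simpl in *; split; lra.
    + intros t Ht Hts. apply Hnear; auto. pose proof (Rmin_r x (a0 + d / 2)). lra.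
  - destruct Hlim as [M Hnear].
    exists (Rmin x (M - 1)). split.
    + unfold Rmin; destruct Rle_dec; auto.
      destruct b; unfold in_I in *; simpl in *; split; auto; lra.
    + intros t Ht Hts. apply Hnear; auto. pose proof (Rmin_r x (M - 1)). lra.
Qed.

Lemma tends_left_opp f l : tends_left f l -> tends_left (fun y => - f y) (- l).
Proof.
  intros Hf eps Heps. destruct (Hf eps Heps) as [s [Hs Hnear]].
  exists s; split; auto. intros t Ht Hts.
  rewrite <- Rabs_Ropp. replace (- (- f t - - l)) with (f t - l) by ring. auto.
Qed.

Lemma tends_left_lin f g l m c : tends_left f l -> tends_left g m ->
  tends_left (fun y => c * f y + g y) (c * l + m).
Proof.
  intros Hf Hg eps Heps.
  assert (Hc : 0 < Rabs c + 1) by (pose proof (Rabs_pos c); lra).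
  destruct (Hf (eps / 2 / (Rabs c + 1))) as [s1 [Hs1 Hnear1]].
  { apply Rdiv_lt_0_compat; lra. }
  destruct (Hg (eps / 2)) as [s2 [Hs2 Hnear2]]; [lra|].
  exists (Rmin s1 s2); split; [apply in_I_Rmin; auto|].
  intros t Ht Hts. pose proof (Rmin_l s1 s2). pose proof (Rmin_r s1 s2).
  specialize (Hnear1 t Ht ltac:(lra)). specialize (Hnear2 t Ht ltac:(lra)).
  apply (Rmult_lt_compat_l (Rabs c + 1)) in Hnear1; [|lra].
  replace ((Rabs c + 1) * (eps / 2 / (Rabs c + 1))) with (eps / 2) in Hnear1
    by (field; lra).
  replace (c * f t + g t - (c * l + m)) with (c * (f t - l) + (g t - m)) by ring.
  eapply Rle_lt_trans; [apply Rabs_triang|]. rewrite Rabs_mult.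
  pose proof (Rabs_pos (f t - l)). lra.
Qed.

Lemma tends_left_le_value f l t : in_I a b t -> tends_left f l ->
  (forall y, in_I a b y -> y < t -> f y <= f t) -> l <= f t.
Proof.
  intros Ht Hlim Hle. apply Rnot_lt_le; intros Hlt.
  destruct (Hlim (l - f t)) as [s [Hs Hnear]]; [lra|].
  destruct (in_I_exists_lt (Rmin s t)) as [y [Hy Hys]]; [apply in_I_Rmin; auto|].
  pose proof (Rmin_l s t). pose proof (Rmin_r s t).
  specialize (Hnear y Hy ltac:(lra)). specialize (Hle y Hy ltac:(lra)).
  apply Rabs_def2 in Hnear. lra.
Qed.

End Interval.

Lemma nondecreasing_of_deriv_nonneg f df x y : x <= y ->
  (forall c, x <= c <= y -> derivable_pt_lim f c (df c)) ->
  (forall c, x <= c <= y -> 0 <= df c) -> f x <= f y.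
Proof.
  intros Hxy Hd Hpos. destruct (Req_dec x y) as [<-|Hne]; [lra|].
  destruct (MVT_cor2 f df x y) as [c [Heq Hc]]; [lra|auto|].
  specialize (Hpos c ltac:(lra)). nra.
Qed.

Lemma deriv_nonneg_of_nondecreasing a b f x l : in_I a b x -> derivable_pt_lim f x l ->
  (forall u v, in_I a b u -> in_I a b v -> u <= v -> f u <= f v) -> 0 <= l.
Proof.
  intros Hx Hd Hmon. apply Rnot_lt_le; intros Hl.
  destruct (Hd (- l)) as [d Hnear]; [lra|].
  destruct (in_I_exists_gt a b x Hx) as [z [Hz Hxz]].
  pose proof (cond_pos d).
  set (h := Rmin (d / 2) (z - x)).
  assert (Hh : 0 < h) by (unfold h, Rmin; destruct Rle_dec; lra).
  assert (Hhz : h <= z - x) by apply Rmin_r.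
  assert (Hhd : h <= d / 2) by apply Rmin_l.
  specialize (Hnear h ltac:(lra)). rewrite Rabs_right in Hnear by lra.
  specialize (Hnear ltac:(lra)).
  assert (Hquot : 0 <= (f (x + h) - f x) / h).
  { apply Rmult_le_pos; [|left; apply Rinv_0_lt_compat; lra].
    enough (f x <= f (x + h)) by lra.
    apply Hmon; auto; [apply (in_I_between a b x z); auto|]; lra. }
  apply Rabs_def2 in Hnear. lra.
Qed.

Lemma tends_left_le_of_deriv_nonneg a b f df l t : in_I a b t -> tends_left a b f l ->
  (forall y, in_I a b y -> y <= t -> derivable_pt_lim f y (df y) /\ 0 <= df y) ->
  l <= f t.
Proof.
  intros Ht Hlim Hd. apply (tends_left_le_value a b f l t Ht Hlim).
  intros y Hy Hyt.
  assert (Hseg : forall c, y <= c <= t -> derivable_pt_lim f c (df c) /\ 0 <= df c).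
  { intros c Hc. apply Hd; [apply (in_I_between a b y t); auto|]; lra. }
  apply (nondecreasing_of_deriv_nonneg f df); [lra| |]; intros c Hc; apply Hseg; auto.
Qed.

Lemma tends_left_eq_of_deriv_zero a b f l t : in_I a b t -> tends_left a b f l ->
  (forall y, in_I a b y -> derivable_pt_lim f y 0) -> f t = l.
Proof.
  intros Ht Hlim Hd. apply Rle_antisym.
  - enough (- l <= - f t) by lra.
    apply (tends_left_le_of_deriv_nonneg a b (fun y => - f y) (fun _ => - 0));
      [auto|apply tends_left_opp; auto|].
    intros y Hy _. split; [apply derivable_pt_lim_opp; auto|lra].
  - apply (tends_left_le_of_deriv_nonneg a b f (fun _ => 0)); auto.
    intros y Hy _. split; [auto|lra].
Qed.

Section EnergyEstimate.
Variables (a b : option R) (p r dp dr w dw dpw : R -> R) (lam : R).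
Let u y := p y * dw y.
Let q y := p y * r y.
Let energy y := lam * (w y * w y) + u y * u y / q y.

Hypothesis pr_pos : forall x, in_I a b x -> 0 < p x /\ 0 < r x.
Hypothesis p_deriv : forall x, in_I a b x -> derivable_pt_lim p x (dp x).
Hypothesis r_deriv : forall x, in_I a b x -> derivable_pt_lim r x (dr x).
Hypothesis q_nondecreasing :
  forall x y, in_I a b x -> in_I a b y -> x <= y -> q x <= q y.
Hypothesis lam_nonneg : 0 <= lam.
Hypothesis w_deriv : forall x, in_I a b x -> derivable_pt_lim w x (dw x).
Hypothesis u_deriv : forall x, in_I a b x -> derivable_pt_lim u x (dpw x).
Hypothesis w_equation : forall x, in_I a b x -> - / r x * dpw x = lam * w x.
Hypothesis w_tends : tends_left a b w 1.
Hypothesis u_tends : tends_left a b u 0.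

Lemma u_deriv_eq y : in_I a b y -> dpw y = - lam * r y * w y.
Proof.
  intros Hy. destruct (pr_pos y Hy).
  replace (dpw y) with (- r y * (- / r y * dpw y)) by (field; lra).
  rewrite w_equation by auto. ring.
Qed.

Lemma w_deriv_eq y : in_I a b y -> dw y = u y / p y.
Proof. intros Hy. destruct (pr_pos y Hy). unfold u. field. lra. Qed.

Lemma w_eq_1_of_lam_zero : lam = 0 -> forall x, in_I a b x -> w x = 1.
Proof.
  intros Hlam0 x Hx.
  assert (Hu : forall y, in_I a b y -> u y = 0).
  { intros y Hy. apply (tends_left_eq_of_deriv_zero a b u 0 y Hy u_tends).
    intros z Hz. replace 0 with (dpw z) by (rewrite u_deriv_eq, Hlam0 by auto; ring).
    auto. }
  apply (tends_left_eq_of_deriv_zero a b w 1 x Hx w_tends).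
  intros y Hy. replace 0 with (dw y) by (rewrite w_deriv_eq, Hu by auto; lra).
  auto.
Qed.

Lemma sign_near_left_end x : in_I a b x -> exists s, in_I a b s /\ s <= x /\
  forall t, in_I a b t -> t < s -> 0 < w t <= 1 /\ u t <= 0.
Proof.
  intros Hx. destruct (w_tends 1) as [s0 [Hs0 Hnear]]; [lra|].
  set (s := Rmin s0 x). assert (Hss0 : s <= s0) by apply Rmin_l.
  exists s. split; [apply in_I_Rmin; auto|split; [apply Rmin_r|]].
  assert (Hw : forall t, in_I a b t -> t < s -> 0 < w t).
  { intros t Ht Hts. specialize (Hnear t Ht (Rlt_le_trans _ _ _ Hts Hss0)).
    apply Rabs_def2 in Hnear. lra. }
  assert (Hu : forall t, in_I a b t -> t < s -> u t <= 0).
  { intros t Ht Hts. enough (- 0 <= - u t) by lra.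
    apply (tends_left_le_of_deriv_nonneg a b (fun y => - u y) (fun y => - dpw y));
      [auto|apply tends_left_opp; auto|].
    intros y Hy Hyt. split; [apply derivable_pt_lim_opp; auto|].
    rewrite u_deriv_eq by auto. destruct (pr_pos y Hy).
    specialize (Hw y Hy (Rle_lt_trans _ _ _ Hyt Hts)).
    assert (0 <= lam * r y) by (apply Rmult_le_pos; lra). nra. }
  intros t Ht Hts. split; [split; auto|auto].
  enough (- 1 <= - w t) by lra.
  apply (tends_left_le_of_deriv_nonneg a b (fun y => - w y) (fun y => - dw y));
    [auto|apply tends_left_opp; auto|].
  intros y Hy Hyt. split; [apply derivable_pt_lim_opp; auto|].
  rewrite w_deriv_eq by auto. destruct (pr_pos y Hy).
  specialize (Hu y Hy (Rle_lt_trans _ _ _ Hyt Hts)).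
  pose proof (Rinv_0_lt_compat (p y) ltac:(lra)). unfold Rdiv. nra.
Qed.

Lemma kinetic_bound k t : 0 < k -> in_I a b t ->
  (forall y, in_I a b y -> y <= t -> w y <= 1 /\ k * sqrt (q y) <= - u y) ->
  k * - u t <= lam * sqrt (q t) * (1 - w t).
Proof.
  intros Hk Ht Hbelow. set (c := lam * sqrt (q t) / k).
  assert (Hc : 0 <= c).
  { apply Rmult_le_pos; [apply Rmult_le_pos; [lra|apply sqrt_pos]|].
    left; apply Rinv_0_lt_compat; lra. }
  assert (Hck : c * k = lam * sqrt (q t)) by (unfold c; field; lra).
  rewrite <- Hck.
  enough (Hphi : - c * 1 + 0 <= - c * w t + u t)
    by (apply (Rmult_le_compat_l k) in Hphi; lra).
  apply (tends_left_le_of_deriv_nonneg a b (fun y => - c * w y + u y)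
           (fun y => - c * dw y + dpw y));
    [auto|apply tends_left_lin; auto|].
  intros y Hy Hyt. destruct (Hbelow y Hy Hyt) as [Hw1 Hku]. destruct (pr_pos y Hy).
  split.
  { exact (derivable_pt_lim_plus _ _ y _ _
             (derivable_pt_lim_scal w (- c) y _ (w_deriv y Hy)) (u_deriv y Hy)). }
  (* c (-u) dominates λ p r on (a,t] because √(p r) is largest at t. *)
  assert (Hcu : lam * q y <= c * - u y).
  { assert (Hsq : sqrt (q y) <= sqrt (q t)) by (apply sqrt_le_1_alt, q_nondecreasing; auto).
    assert (Hqy : sqrt (q y) * sqrt (q y) = q y) by (apply sqrt_sqrt; unfold q; nra).
    assert (Hlq : lam * sqrt (q y) * sqrt (q y) <= lam * sqrt (q t) * sqrt (q y)).
    { apply Rmult_le_compat_r; [apply sqrt_pos|]. apply Rmult_le_compat_l; lra. }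
    pose proof (Rmult_le_compat_l c _ _ Hc Hku).
    rewrite Rmult_assoc, Hqy in Hlq. rewrite <- Hck in Hlq. lra. }
  rewrite w_deriv_eq, u_deriv_eq by auto.
  replace (- c * (u y / p y) + - lam * r y * w y)
    with ((c * - u y - lam * q y) / p y + lam * r y * (1 - w y)) by (unfold q; field; lra).
  apply Rplus_le_le_0_compat.
  - apply Rmult_le_pos; [lra|left; apply Rinv_0_lt_compat; lra].
  - apply Rmult_le_pos; nra.
Qed.

Lemma kinetic_small_near_left eps s : 0 < lam -> 0 < eps -> in_I a b s ->
  (forall t, in_I a b t -> t < s -> 0 < w t <= 1 /\ u t <= 0) ->
  exists t, in_I a b t /\ t < s /\ u t * u t <= eps * q t.
Proof.
  intros Hlam Heps Hs Hsign. apply NNPP; intros Hnone.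
  assert (Hbig : forall t, in_I a b t -> t < s -> eps * q t < u t * u t).
  { intros t Ht Hts. apply Rnot_le_lt; intros Hle. apply Hnone; eauto. }
  destruct (w_tends (eps / lam)) as [s1 [Hs1 Hnear]]; [apply Rdiv_lt_0_compat; lra|].
  destruct (in_I_exists_lt a b (Rmin s1 s)) as [t [Ht Hts]]; [apply in_I_Rmin; auto|].
  pose proof (Rmin_l s1 s). pose proof (Rmin_r s1 s).
  assert (Hk : 0 < sqrt eps) by (apply sqrt_lt_R0; lra).
  assert (Hbound : sqrt eps * - u t <= lam * sqrt (q t) * (1 - w t)).
  { apply kinetic_bound; auto. intros y Hy Hyt.
    destruct (Hsign y Hy ltac:(lra)) as [[_ Hw1] Hu]. destruct (pr_pos y Hy).
    split; [auto|].
    rewrite <- sqrt_mult by (unfold q; nra).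
    rewrite <- (sqrt_square (- u y)) by lra.
    apply sqrt_le_1_alt. specialize (Hbig y Hy ltac:(lra)). nra. }
  destruct (Hsign t Ht ltac:(lra)) as [[_ Hw1] Hu]. destruct (pr_pos t Ht).
  specialize (Hbig t Ht ltac:(lra)).
  specialize (Hnear t Ht ltac:(lra)). apply Rabs_def2 in Hnear as [_ Hnear].
  assert (Hclose : lam * (1 - w t) < eps).
  { assert (Hlt : 1 - w t < eps / lam) by lra.
    apply (Rmult_lt_compat_l lam) in Hlt; [|lra].
    replace (lam * (eps / lam)) with eps in Hlt by (field; lra). lra. }
  assert (Hlhs : 0 <= sqrt eps * - u t) by (apply Rmult_le_pos; lra).
  pose proof (Rmult_le_compat _ _ _ _ Hlhs Hlhs Hbound Hbound) as Hsquare.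
  replace (sqrt eps * - u t * (sqrt eps * - u t))
    with ((sqrt eps * sqrt eps) * (u t * u t)) in Hsquare by ring.
  replace (lam * sqrt (q t) * (1 - w t) * (lam * sqrt (q t) * (1 - w t)))
    with ((lam * (1 - w t)) * (lam * (1 - w t)) * (sqrt (q t) * sqrt (q t))) in Hsquare
    by ring.
  rewrite !sqrt_sqrt in Hsquare by (unfold q; nra).
  assert (Hq : 0 < q t) by (unfold q; nra).
  assert (HD : 0 <= lam * (1 - w t)) by (apply Rmult_le_pos; lra).
  assert (HD2 : lam * (1 - w t) * (lam * (1 - w t)) < eps * eps) by nra.
  apply (Rmult_lt_compat_l eps) in Hbig; [|lra].
  apply (Rmult_lt_compat_r (q t)) in HD2; [|lra].
  lra.
Qed.

Lemma energy_nonincreasing x y : in_I a b x -> in_I a b y -> x <= y ->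
  energy y <= energy x.
Proof.
  intros Hx Hy Hxy.
  set (dq z := dp z * r z + p z * dr z).
  set (dE z := - (dq z * (u z * u z)) / (q z)²).
  enough (- energy x <= - energy y) by lra.
  apply (nondecreasing_of_deriv_nonneg (fun z => - energy z) (fun z => - dE z));
    [lra| |]; intros z Hz;
    assert (Hzi : in_I a b z) by (apply (in_I_between a b x y); auto);
    destruct (pr_pos z Hzi); assert (Hq : 0 < q z) by (unfold q; nra).
  - apply derivable_pt_lim_opp.
    replace (dE z) with (lam * (dw z * w z + w z * dw z) +
        ((dpw z * u z + u z * dpw z) * q z - dq z * (u z * u z)) / (q z)²)
      by (unfold dE; rewrite u_deriv_eq, w_deriv_eq by auto; unfold q, Rsqr; field; lra).
    exact (derivable_pt_lim_plus _ _ z _ _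
      (derivable_pt_lim_scal _ lam z _
         (derivable_pt_lim_mult w w z _ _ (w_deriv z Hzi) (w_deriv z Hzi)))
      (derivable_pt_lim_div _ q z _ _
         (derivable_pt_lim_mult u u z _ _ (u_deriv z Hzi) (u_deriv z Hzi))
         (derivable_pt_lim_mult p r z _ _ (p_deriv z Hzi) (r_deriv z Hzi))
         ltac:(lra))).
  - assert (Hdq : 0 <= dq z).
    { apply (deriv_nonneg_of_nondecreasing a b q z); auto.
      apply derivable_pt_lim_mult; auto. }
    unfold dE, Rdiv. rewrite Ropp_mult_distr_l, Ropp_involutive.
    apply Rmult_le_pos; [apply Rmult_le_pos; nra|].
    left; apply Rinv_0_lt_compat. unfold Rsqr; nra.
Qed.

Lemma energy_near_left_end eps x : 0 < lam -> 0 < eps -> in_I a b x ->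
  exists t, in_I a b t /\ t <= x /\ energy t <= lam + eps.
Proof.
  intros Hlam Heps Hx.
  destruct (sign_near_left_end x Hx) as [s [Hs [Hsx Hsign]]].
  destruct (kinetic_small_near_left eps s Hlam Heps Hs Hsign) as [t [Ht [Hts Hkin]]].
  exists t. split; [auto|split; [lra|]].
  destruct (Hsign t Ht Hts) as [[Hw0 Hw1] _]. destruct (pr_pos t Ht).
  assert (Hq : 0 < q t) by (unfold q; nra).
  assert (Hkin' : u t * u t / q t <= eps).
  { apply (Rmult_le_reg_r (q t)); auto.
    replace (u t * u t / q t * q t) with (u t * u t) by (field; lra). lra. }
  assert (Hw2 : lam * (w t * w t) <= lam * 1) by (apply Rmult_le_compat_l; nra).
  unfold energy. lra.
Qed.

Lemma w_sq_le_1 x : in_I a b x -> w x * w x <= 1.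
Proof.
  intros Hx. destruct (Req_dec lam 0) as [Hlam0|Hlam].
  - rewrite (w_eq_1_of_lam_zero Hlam0 x Hx). lra.
  - assert (Hlam_pos : 0 < lam) by lra.
    assert (Hbound : forall eps, 0 < eps -> lam * (w x * w x) <= lam + eps).
    { intros eps Heps.
      destruct (energy_near_left_end eps x Hlam_pos Heps Hx) as [t [Ht [Htx HE]]].
      pose proof (energy_nonincreasing t x Ht Hx Htx).
      destruct (pr_pos x Hx).
      assert (0 <= u x * u x / q x).
      { apply Rmult_le_pos; [nra|left; apply Rinv_0_lt_compat; unfold q; nra]. }
      unfold energy in *. lra. }
    apply Rnot_lt_le; intros Hgt.
    specialize (Hbound ((lam * (w x * w x) - lam) / 2)). nra.
Qed.

End EnergyEstimate.

Theorem mainTheorem2 :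
  forall (a b : option R) (p r : R -> R),
    ext_lt a b ->
    (forall x, in_I a b x -> 0 < p x /\ 0 < r x) ->
    loc_AC_with_loc_AC_deriv a b p ->
    loc_AC_with_loc_AC_deriv a b r ->
    integrability_condition a b p r ->
    (forall x y, in_I a b x -> in_I a b y -> x <= y -> p x * r x <= p y * r y) ->
    forall (lam : R) (w : R -> R),
      0 <= lam ->
      is_w_lambda a b p r lam w ->
      forall x, in_I a b x -> Rabs (w x) <= 1.
Proof.
  (* The integrability condition and absolute continuity only serve the
     existence of w_λ; the estimate itself needs differentiability alone. *)
  intros a b p r _ Hpos [_ [dp [Hdp _]]] [_ [dr [Hdr _]]] _ Hmon lam w Hlam
    [dw [dpw [Hdw [Hdpw [Heq [Hw1 Hu0]]]]]] x Hx.
  assert (Hsq : w x * w x <= 1).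
  { apply w_sq_le_1 with (a := a) (b := b) (p := p) (r := r) (dp := dp) (dr := dr)
      (dw := dw) (dpw := dpw) (lam := lam); auto;
      apply (lim_at_left_end_tends_left a b _ _ x); auto. }
  apply Rabs_le. split; nra.
Qed.
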